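(* Let $\mathsf{PA}^-$ be the theory of the non-negative parts of discretely ordered commutative rings, and let $T$ be $\mathsf{PA}^-$ together with all universal sentences (in the language $0,1,+,\cdot,\leq$) that are true in $\mathbb N$. Using the Markov coding of sequences (ur-strings) described in the context, and coding Hilbert-style proofs of the theory $\mathsf{BeSh}$ by such ur-strings, $T$ does not prove the sentence $\mathsf{con}(\mathsf{BeSh})$.
   Context: The theory $\mathsf{BeSh}$: its language consists of exactly two sentences, $\bot$ and $(\bot\to\bot)$; its only axiom is $(\bot\to\bot)$; its only rule is Modus Ponens (from $\bot$ and $(\bot\to\bot)$ infer $\bot$). A Hilbert-style proof is a finite sequence of sentences in which each occurrence is either an axiom or follows by Modus Ponens from two strictly earlier occurrences. Fix Gödel numbers $\ulcorner\bot\urcorner$ and $\ulcorner\bot\to\bot\urcorner$, which are distinct positive natural numbers. Markov coding. For a discretely ordered commutative ring $\mathcal R$ with non-negative part $\mathcal R^+$, let $\mathsf{SL}_2(\mathcal R^+)$ be the monoid (under matrix multiplication) of $2\times 2$ matrices with entries in $\mathcal R^+$ and determinant $1$; in a model of $\mathsf{PA}^-$ such matrices are represented by quadruples of elements, and quantifiers over matrices range over such quadruples. Write $\alpha_{ij}$ ($i,j\in\{0,1\}$) for the entries. Let $\mathtt A=\begin{pmatrix}1&1\\0&1\end{pmatrix}$, $\mathtt B=\begin{pmatrix}1&0\\1&1\end{pmatrix}$, and for a number $n$ let $[n]:=\mathtt B\mathtt A^n=\begin{pmatrix}1&n\\1&n+1\end{pmatrix}$. Define: $\alpha\le\beta$ iff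 $\alpha_{ij}\le\beta_{ij}$ for all $i,j$, and $\alpha<\beta$ iff $\alpha\le\beta$ and $\alpha\ne\beta$; $\alpha\preceq_{\mathsf i}\beta$ iff $\alpha^{-1}\beta$ has non-negative entries (i.e. $\alpha_{11}\beta_{00}\ge\alpha_{01}\beta_{10}$, $\alpha_{11}\beta_{01}\ge\alpha_{01}\beta_{11}$, $\alpha_{00}\beta_{10}\ge\alpha_{10}\beta_{00}$, $\alpha_{00}\beta_{11}\ge\alpha_{10}\beta_{01}$), and $\alpha\preceq_{\mathsf e}\beta$ iff $\beta\alpha^{-1}$ has non-negative entries; $\mathsf{ur}(\alpha)$ iff $\alpha$ is the identity matrix or $\mathtt B\preceq_{\mathsf i}\alpha$; $\alpha\preceq^{\mathsf u}_{\mathsf i}\beta$ iff $\alpha\preceq_{\mathsf i}\beta\wedge\mathsf{ur}(\alpha)\wedge\mathsf{ur}(\alpha^{-1}\beta)$, and $\alpha\preceq^{\mathsf u}_{\mathsf e}\beta$ iff $\alpha\preceq_{\mathsf e}\beta\wedge\mathsf{ur}(\alpha)\wedge\mathsf{ur}(\beta\alpha^{-1})$; $\mathsf{occ}(\alpha,n,\beta)$ iff $\alpha\preceq^{\mathsf u}_{\mathsf i}\beta\wedge[n]\preceq^{\mathsf u}_{\mathsf e}\alpha$. $\mathsf{proof}_0(\pi)$ is the formula: $\mathsf{ur}(\pi)\wedge\forall\alpha\le\pi\,\forall n\le\alpha_{01}\,(\mathsf{occ}(\alpha,n,\pi)\to(n=\ulcorner\bot\to\bot\urcorner\vee n=\ulcorner\bot\urcorner))\wedge\forall\alpha\le\pi\,(\mathsf{occ}(\alpha,\ulcorner\bot\urcorner,\pi)\to\exists\beta<\alpha\,\exists\gamma<\alpha\,(\mathsf{occ}(\beta,\ulcorner\bot\urcorner,\alpha)\wedge\mathsf{occ}(\gamma,\ulcorner\bot\to\bot\urcorner,\alpha)))$.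 $\mathsf{proof}(\pi,n)$ iff $\mathsf{proof}_0(\pi)\wedge[n]\preceq_{\mathsf e}\pi$. Finally $\mathsf{con}(\mathsf{BeSh})$ is $\forall\pi\,\neg\mathsf{proof}(\pi,\ulcorner\bot\urcorner)$. *)

From mathcomp Require Import all_boot all_order all_algebra.
Set Implicit Arguments. Unset Strict Implicit. Unset Printing Implicit Defensive.
Import Order.TTheory GRing.Theory Num.Theory.
Local Open Scope ring_scope.

Inductive term : Type :=
  | tvar of nat | tzero | tone
  | tplus of term & term | ttimes of term & term.

Inductive qf : Type :=
  | qeq of term & term | qle of term & term
  | qnot of qf | qand of qf & qf | qor of qf & qf | qimp of qf & qf.

Fixpoint teval (A : Type) (z o : A) (ad mu : A -> A -> A) (e : nat -> A)
  (t : term) : A :=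
  match t with
  | tvar i => e i
  | tzero => z
  | tone => o
  | tplus t1 t2 => ad (teval z o ad mu e t1) (teval z o ad mu e t2)
  | ttimes t1 t2 => mu (teval z o ad mu e t1) (teval z o ad mu e t2)
  end.

Fixpoint feval (A : Type) (z o : A) (ad mu : A -> A -> A) (le : A -> A -> Prop)
  (e : nat -> A) (f : qf) : Prop :=
  match f with
  | qeq t1 t2 => teval z o ad mu e t1 = teval z o ad mu e t2
  | qle t1 t2 => le (teval z o ad mu e t1) (teval z o ad mu e t2)
  | qnot g => ~ feval z o ad mu le e g
  | qand g h => feval z o ad mu le e g /\ feval z o ad mu le e h
  | qor g h => feval z o ad mu le e g \/ feval z o ad mu le e h
  | qimp g h => feval z o ad mu le e g -> feval z o ad mu le e h
  end.

Definition true_in_N (f : qf) : Prop :=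
  forall e : nat -> nat, feval 0%N 1%N addn muln (fun a b => (a <= b)%N) e f.

Definition holds_in_Rplus (R : realDomainType) (f : qf) : Prop :=
  forall e : nat -> R, (forall i, 0 <= e i) ->
    feval 0 1 +%R *%R (fun a b : R => a <= b) e f.

Definition discrete (R : realDomainType) : Prop :=
  forall x : R, 0 < x -> 1 <= x.

(* R^+ satisfies every universal sentence true in N (together with PA^-,
   which R^+ satisfies automatically as R is a discretely ordered ring). *)
Definition models_T (R : realDomainType) : Prop :=
  discrete R /\ forall f : qf, true_in_N f -> holds_in_Rplus R f.

Record mat (R : Type) := Mat { m00 : R; m01 : R; m10 : R; m11 : R }.

Section Markov.
Variable R : realDomainType.
Implicit Types a b c : mat R.

Definition sl2p a : Prop :=
  [/\ 0 <= m00 a, 0 <= m01 a, 0 <= m10 a, 0 <= m11 a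
    & m00 a * m11 a - m01 a * m10 a = 1].

Definition mmul a b : mat R :=
  Mat (m00 a * m00 b + m01 a * m10 b) (m00 a * m01 b + m01 a * m11 b)
      (m10 a * m00 b + m11 a * m10 b) (m10 a * m01 b + m11 a * m11 b).

(* inverse of a determinant-1 matrix *)
Definition minv a : mat R := Mat (m11 a) (- m01 a) (- m10 a) (m00 a).

Definition nonneg a : Prop :=
  [/\ 0 <= m00 a, 0 <= m01 a, 0 <= m10 a & 0 <= m11 a].

Definition mle a b : Prop :=
  [/\ m00 a <= m00 b, m01 a <= m01 b, m10 a <= m10 b & m11 a <= m11 b].
Definition mlt a b : Prop := mle a b /\ a <> b.

Definition matI : mat R := Mat 1 0 0 1.
Definition matA : mat R := Mat 1 1 0 1.
Definition matB : mat R := Mat 1 0 1 1.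
(* [n] = B A^n *)
Definition mcode (n : R) : mat R := Mat 1 n 1 (n + 1).

Definition prec_i a b : Prop := nonneg (mmul (minv a) b).
Definition prec_e a b : Prop := nonneg (mmul b (minv a)).
Definition ur a : Prop := a = matI \/ prec_i matB a.
Definition prec_iu a b : Prop := [/\ prec_i a b, ur a & ur (mmul (minv a) b)].
Definition prec_eu a b : Prop := [/\ prec_e a b, ur a & ur (mmul b (minv a))].
Definition occ a (n : R) b : Prop := prec_iu a b /\ prec_eu (mcode n) a.

(* gb = Goedel number of bot, gbb = Goedel number of (bot -> bot) *)
Definition proof0 (gb gbb : nat) (p : mat R) : Prop :=
  [/\ ur p,
      (forall a, sl2p a -> mle a p ->
         forall n : R, 0 <= n -> n <= m01 a ->
           occ a n p -> n = gbb%:R \/ n = gb%:R)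
    & (forall a, sl2p a -> mle a p -> occ a gb%:R p ->
         exists b c, [/\ sl2p b, sl2p c, mlt b a, mlt c a &
                         (occ b gb%:R a /\ occ c gbb%:R a)])].

Definition proof (gb gbb : nat) (p : mat R) (n : R) : Prop :=
  proof0 gb gbb p /\ prec_e (mcode n) p.

Definition con_BeSh (gb gbb : nat) : Prop :=
  forall p, sl2p p -> ~ proof gb gbb p gb%:R.

End Markov.

(* The model is a ring of integer sequences, compared eventually: its elements
   are the sequences [m |-> sum c * la ^ (b m^2) * mu ^ (a m)] with [a + b] even,
   for fixed reals [mu, la > 1]. Such a sum is zero or eventually has the sign
   of its lexicographically dominant coefficient, so the ring is discretely
   ordered and each atomic formula is eventually decided as in N at level [m];
   hence every universal truth of N holds in it.
   The nonstandard proof [pi] has at level [m] the code [[bbot]^m [bot]^(m^2)],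
   where [bbot] codes [bot -> bot]; taking for [mu, la] the larger eigenvalues
   of [[bbot]] and [[bot]] makes its entries such sums. Every occurrence of
   [bot] in [pi] has a [bot] and a [bbot] before it, except the first one,
   [[bbot]^m [bot]], which is not in the model: its entries only have odd
   exponents [a + b]. *)
From HB Require Import structures.
From mathcomp Require Import all_boot all_order all_algebra.
From mathcomp Require Import zify ring lra.
From mathcomp Require Import boolp realalg.
Import Order.TTheory GRing.Theory Num.Theory.
Local Open Scope ring_scope.
Set Implicit Arguments. Unset Strict Implicit. Unset Printing Implicit Defensive.

Definition eventually (P : nat -> Prop) := exists M, forall m, (M <= m)%N -> P m.
Definition frequently (P : nat -> Prop) := forall M, exists2 m, (M <= m)%N & P m.

Lemma eventually_and (P Q : nat -> Prop) :
  eventually P -> eventually Q -> eventually (fun m => P m /\ Q m).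
Proof.
case=> M1 H1 [M2 H2]; exists (maxn M1 M2) => m; rewrite geq_max => /andP[m1 m2].
by split; [apply: H1 | apply: H2].
Qed.

Lemma eventually_mono (P Q : nat -> Prop) :
  (forall m, P m -> Q m) -> eventually P -> eventually Q.
Proof. by move=> PQ [M HM]; exists M => m /HM /PQ. Qed.

Lemma eventually_andE (P Q : nat -> Prop) :
  eventually (fun m => P m /\ Q m) <-> eventually P /\ eventually Q.
Proof.
split=> [PQ|[]]; last exact: eventually_and.
by split; apply: eventually_mono PQ => m [].
Qed.

Lemma eventually_and3E (P Q S : nat -> Prop) :
  eventually (fun m => [/\ P m, Q m & S m]) <->
  [/\ eventually P, eventually Q & eventually S].
Proof.
split=> [PQS|[evP evQ evS]].
  by split; apply: eventually_mono PQS => m [].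
by apply: eventually_mono (eventually_and evP (eventually_and evQ evS)) => m [? []].
Qed.

Lemma eventuallyT (P : nat -> Prop) : (forall m, P m) -> eventually P.
Proof. by exists 0%N. Qed.

Lemma eventually_ex (P : nat -> Prop) : eventually P -> exists m, P m.
Proof. by case=> M HM; exists M; apply: HM. Qed.

Lemma eventually_frequently (P Q : nat -> Prop) :
  eventually P -> frequently Q -> exists m, P m /\ Q m.
Proof. by case=> M HM /(_ M) [m /HM]; exists m. Qed.

Lemma frequently_mono (P Q : nat -> Prop) :
  (forall m, P m -> Q m) -> frequently P -> frequently Q.
Proof. by move=> PQ freqP M; have [m Mm /PQ] := freqP M; exists m. Qed.

Lemma eventually_or_frequently_not (P : nat -> Prop) :
  eventually P \/ frequently (fun m => ~ P m).
Proof.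
have [|notP] := pselect (eventually P); first by left.
right=> M; apply: contrapT => noM; apply: notP; exists M => m Mm.
by apply: contrapT => nPm; apply: noM; exists m.
Qed.

(** * Exponential polynomials *)

Section ExpPoly.
Variable F : archiRealFieldType.

(* An exponent (b, a) stands for [la ^ (b m^2) * mu ^ (a m)]; the
   lexicographic order is the order of growth. *)
Definition expo := (int *l int)%type.
Definition epoly := seq (expo * F).

Definition expo_add (p q : expo) : expo := (p.1 + q.1, p.2 + q.2).
Definition expo_sub (p q : expo) : expo := (p.1 - q.1, p.2 - q.2).
Definition expo_odd (p : expo) : bool := ~~ (2 %| p.1 + p.2)%Z.

Definition ecoef (L : epoly) (p : expo) : F := \sum_(t <- L | t.1 == p) t.2.

Definition epconst (c : F) : epoly := [:: ((0, 0), c)].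
Definition epopp (L : epoly) : epoly := [seq (t.1, - t.2) | t <- L].
Definition epmul (L1 L2 : epoly) : epoly :=
  [seq (expo_add t.1 u.1, t.2 * u.2) | t <- L1, u <- L2].

Definition has_parity (b : bool) (L : epoly) := all (fun t => expo_odd t.1 == b) L.

Lemma lt_expo_sub (p q : expo) : (p < q)%O -> (expo_sub p q < (0, 0) :> expo)%O.
Proof.
by case: p q => [b a] [d c]; rewrite !ltxi_pair /= subr_le0 subr_ge0 subr_lt0.
Qed.

Lemma expo_subK (p q : expo) : expo_add (expo_sub p q) q = p.
Proof. by case: p q => [b a] [d c]; rewrite /expo_add /= !subrK. Qed.

Lemma expo_oddD (p q : expo) :
  expo_odd (expo_add p q) = expo_odd p (+) expo_odd q.
Proof.
rewrite /expo_odd /expo_add /=.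
by case: (boolP (2 %| p.1 + p.2)%Z); case: (boolP (2 %| q.1 + q.2)%Z) => /= h1 h2;
  apply/negbLR; rewrite ?negbK; lia.
Qed.

Lemma ecoef_cat L1 L2 p : ecoef (L1 ++ L2) p = ecoef L1 p + ecoef L2 p.
Proof. by rewrite /ecoef big_cat. Qed.

Lemma ecoefN L p : ecoef (epopp L) p = - ecoef L p.
Proof. by rewrite /ecoef big_map -sumrN. Qed.

Lemma ecoef_filter L p q :
  ecoef [seq t <- L | t.1 != p] q = if q == p then 0 else ecoef L q.
Proof.
rewrite /ecoef big_filter_cond; case: eqP => [->|/eqP qp].
  by apply: big1 => t /andP[/negbTE ->].
by apply: eq_bigl => t; case: (eqVneq t.1 q) => [->|]; rewrite ?andbT ?andbF.
Qed.

Lemma has_parity_cat b L1 L2 :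
  has_parity b L1 -> has_parity b L2 -> has_parity b (L1 ++ L2).
Proof. by rewrite /has_parity all_cat => -> ->. Qed.

Lemma has_parityN b L : has_parity b L -> has_parity b (epopp L).
Proof. by rewrite /has_parity all_map. Qed.

Lemma has_parityM b1 b2 L1 L2 :
  has_parity b1 L1 -> has_parity b2 L2 -> has_parity (b1 (+) b2) (epmul L1 L2).
Proof.
move=> /allP h1 /allP h2; apply/allP => _ /allpairsP[[t u] [/= tL uL ->]].
by rewrite /= expo_oddD (eqP (h1 t tL)) (eqP (h2 u uL)).
Qed.

Lemma ecoef_parity b L p : has_parity b L -> expo_odd p != b -> ecoef L p = 0.
Proof.
move=> /allP hL hp; rewrite /ecoef big_seq_cond big1 // => t /andP[tL /eqP tp].
by move: (hL t tL) hp; rewrite tp => ->.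
Qed.

Lemma size_filter_neq (L : epoly) p :
  p \in map fst L -> (size [seq t <- L | t.1 != p] < size L)%N.
Proof.
move=> /mapP[t tL ->]; rewrite size_filter -(count_predC (fun u => u.1 != t.1) L).
rewrite -[X in (X < _)%N]addn0 ltn_add2l -has_count.
by apply/hasP; exists t; rewrite //= negbK.
Qed.


Record rates := Rates {
  rate_mu : F; rate_la : F; rate_mu_gt1 : 1 < rate_mu; rate_la_gt1 : 1 < rate_la }.

Variable G : rates.
Local Notation mu := (rate_mu G).
Local Notation la := (rate_la G).

Definition expmono (p : expo) (m : nat) : F :=
  la ^ (p.1 * (m * m)%N%:Z) * mu ^ (p.2 * m%:Z).
Definition epeval (L : epoly) (m : nat) : F := \sum_(t <- L) t.2 * expmono t.1 m.

Lemma mu_gt0 : 0 < mu. Proof. exact: lt_trans ltr01 (rate_mu_gt1 G). Qed.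
Lemma la_gt0 : 0 < la. Proof. exact: lt_trans ltr01 (rate_la_gt1 G). Qed.

Lemma expmono_gt0 p m : 0 < expmono p m.
Proof. by rewrite mulr_gt0 // exprz_gt0 // ?mu_gt0 ?la_gt0. Qed.

Lemma expmonoD p q m : expmono (expo_add p q) m = expmono p m * expmono q m.
Proof.
rewrite /expmono /= !mulrDl !exprzDr ?unitfE ?gt_eqF ?mu_gt0 ?la_gt0 //.
by rewrite mulrACA.
Qed.

Lemma epeval_cat L1 L2 m : epeval (L1 ++ L2) m = epeval L1 m + epeval L2 m.
Proof. by rewrite /epeval big_cat. Qed.

Lemma epevalN L m : epeval (epopp L) m = - epeval L m.
Proof. by rewrite /epeval big_map -sumrN; apply: eq_bigr => t _; rewrite mulNr. Qed.

Lemma epeval_const c m : epeval (epconst c) m = c.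
Proof. by rewrite /epeval big_seq1 /expmono !mul0r !expr0z !mulr1. Qed.

Lemma epevalM L1 L2 m : epeval (epmul L1 L2) m = epeval L1 m * epeval L2 m.
Proof.
rewrite /epeval big_allpairs_dep mulr_suml; apply: eq_bigr => t _.
by rewrite mulr_sumr; apply: eq_bigr => u _; rewrite expmonoD mulrACA.
Qed.

Lemma epeval_split L p m :
  epeval L m = ecoef L p * expmono p m + epeval [seq t <- L | t.1 != p] m.
Proof.
rewrite /epeval /ecoef (bigID (fun t => t.1 == p)) /= big_filter mulr_suml.
by congr (_ + _); apply: eq_bigr => t /eqP ->.
Qed.

Lemma epeval_coef0 L : (forall p, ecoef L p = 0) -> forall m, epeval L m = 0.
Proof.
have [n] := ubnP (size L); elim: n L => // n IH [|t L] size_lt coef0 m.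
  by rewrite /epeval big_nil.
rewrite (epeval_split _ t.1) coef0 mul0r add0r; apply: IH.
  by rewrite -ltnS (leq_trans _ size_lt) // ltnS size_filter_neq // inE eqxx.
by move=> q; rewrite ecoef_filter coef0; case: ifP.
Qed.

Lemma eventually_gt_exp (x B : F) : 1 < x -> eventually (fun m => B < x ^+ m).
Proof.
move=> x_gt1; have d_gt0 : 0 < x - 1 by rewrite subr_gt0.
have bernoulli (m : nat) : 1 + m%:R * (x - 1) <= x ^+ m.
  elim: m => [|m IH]; first by rewrite mul0r addr0 expr0.
  rewrite exprS; apply: le_trans (ler_wpM2l (ltW (lt_trans ltr01 x_gt1)) IH).
  have := mulr_ge0 (ler0n F m) (ltW (mulr_gt0 d_gt0 d_gt0)); rewrite -natr1; nra.
have B_ge0 : 0 <= `|B| / (x - 1) by rewrite divr_ge0 // ltW.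
exists (Num.Def.archi_bound (`|B| / (x - 1))) => m m_ge; apply: lt_le_trans (bernoulli m).
have : `|B| / (x - 1) < m%:R.
  by apply: lt_le_trans (archi_boundP B_ge0) _; rewrite ler_nat.
rewrite ltr_pdivrMr // => ?; have := ler_norm B; lra.
Qed.

Lemma eventually_inv_exp_lt (x e : F) : 1 < x -> 0 < e ->
  eventually (fun m => (x ^+ m)^-1 < e).
Proof.
move=> x_gt1 e_gt0; apply: eventually_mono (eventually_gt_exp e^-1 x_gt1) => m.
have xm_gt0 : 0 < x ^+ m by rewrite exprn_gt0 // (lt_trans ltr01 x_gt1).
by rewrite -[e in _ < e]invrK ltf_pV2 // posrE invr_gt0.
Qed.

Lemma exprzM_le (x : F) (c : int) (n : nat) : 1 <= x ->
  x ^ (c * n%:Z) <= x ^+ (`|c| * n).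
Proof.
move=> x_ge1; case: c => k; first by rewrite -PoszM.
rewrite NegzE mulNr -PoszM -exprnN; apply: le_trans (exprn_ege1 _ x_ge1).
by rewrite invr_le1 ?exprn_ege1 ?unitfE ?gt_eqF ?exprn_gt0 // (lt_le_trans ltr01).
Qed.

Lemma exprzM_le_inv (x : F) (c : int) (n : nat) : 1 <= x -> c < 0 ->
  x ^ (c * n%:Z) <= (x ^+ n)^-1.
Proof.
move=> x_ge1; case: c => // k _; have x_gt0 : 0 < x := lt_le_trans ltr01 x_ge1.
rewrite NegzE mulNr -PoszM -exprnN lef_pV2 ?posrE ?exprn_gt0 //.
by apply: ler_weXn2l; rewrite // leq_pmull.
Qed.

Lemma expmono_small p (e : F) : (p < (0, 0) :> expo)%O -> 0 < e ->
  eventually (fun m => expmono p m < e).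
Proof.
have mu_ge1 := ltW (rate_mu_gt1 G); have la_ge1 := ltW (rate_la_gt1 G).
case: p => [b a]; rewrite ltxi_pair /= => /andP[b_le0 ab] e_gt0; rewrite /expmono.
case: (ltgtP b 0) b_le0 ab => // [b_lt0 _ _ | -> _ /= a_lt0]; last first.
  apply: eventually_mono (eventually_inv_exp_lt (rate_mu_gt1 G) e_gt0) => m.
  by rewrite mul0r expr0z mul1r; apply/le_lt_trans/exprzM_le_inv.
set K := mu ^+ `|a|%N; have K_gt0 : 0 < K by rewrite exprn_gt0 ?mu_gt0.
have two_gt1 : 1 < 2 :> F by rewrite ltr1n.
apply: eventually_mono (eventually_and (eventually_gt_exp (2 * K) (rate_la_gt1 G))
  (eventually_inv_exp_lt two_gt1 e_gt0)) => m [laK two_e].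
have lam_gt0 : 0 < la ^+ m by rewrite exprn_gt0 ?la_gt0.
have ratio_le : K / la ^+ m <= 2^-1.
  by rewrite ler_pdivrMr // -ler_pdivrMl ?invr_gt0 ?ltr0n // invrK ltW.
have ratio_pow : (K / la ^+ m) ^+ m <= 2^-1 ^+ m.
  by apply: (lerXn2r m) ratio_le; rewrite nnegrE ?invr_ge0 ?divr_ge0 ?ltW.
apply: (le_lt_trans _ two_e); rewrite -exprVn; apply: le_trans ratio_pow.
rewrite expr_div_n -!exprM mulrC /=.
by apply: ler_pM; rewrite ?exprz_ge0 ?exprzM_le ?exprzM_le_inv // ltW ?mu_gt0 ?la_gt0.
Qed.

Lemma epeval_small L (d : F) : (forall t, t \in L -> (t.1 < (0, 0) :> expo)%O) -> 0 < d ->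
  eventually (fun m => `|epeval L m| < d).
Proof.
elim: L d => [|t L IH] d decay d_gt0.
  by apply: eventuallyT => m; rewrite /epeval big_nil normr0.
have c_gt0 : 0 < `|t.2| + 1 by rewrite ltr_wpDl.
have d2_gt0 : 0 < d / 2 by rewrite divr_gt0.
have small_t := expmono_small (decay t (mem_head _ _)) (divr_gt0 d2_gt0 c_gt0).
have small_L := IH _ (fun u uL => decay u (mem_behead (s := t :: L) uL)) d2_gt0.
apply: eventually_mono (eventually_and small_t small_L) => m [tm Lm].
rewrite /epeval big_cons -/(epeval L m); apply: le_lt_trans (ler_normD _ _) _.
rewrite normrM (gtr0_norm (expmono_gt0 _ _)); move: tm; rewrite ltr_pdivlMr //.
by have := expmono_gt0 t.1 m; have := normr_ge0 t.2; nra.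
Qed.

Lemma epoly_max_expo t (L : epoly) :
  exists2 pm, pm \in map fst (t :: L) & forall u, u \in t :: L -> (u.1 <= pm)%O.
Proof.
exists (\big[Order.max/t.1]_(u <- t :: L) u.1) => [|u uL]; last exact: le_bigmax_seq.
rewrite big_seq; apply: (big_ind (fun x => x \in map fst (t :: L))).
- exact: map_f (mem_head _ _).
- by move=> x y xL yL; rewrite /Order.max; case: ifP.
- exact: map_f.
Qed.

Lemma epeval_dominant (L : epoly) (pm : expo) :
  (forall u, u \in L -> (u.1 <= pm)%O) -> ecoef L pm != 0 ->
  eventually (fun m => 0 < ecoef L pm * epeval L m).
Proof.
move=> pm_max c_neq0; set c := ecoef L pm.
set S := [seq (expo_sub u.1 pm, u.2) | u <- [seq u <- L | u.1 != pm]].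
have epeval_L m : epeval L m = (c + epeval S m) * expmono pm m.
  rewrite (epeval_split L pm) mulrDl; congr (_ + _).
  rewrite /epeval big_map mulr_suml; apply: eq_bigr => u _ /=.
  by rewrite -mulrA -expmonoD expo_subK.
have S_decay u : u \in S -> (u.1 < (0, 0) :> expo)%O.
  move=> /mapP[v]; rewrite mem_filter => /andP[v_pm vL] -> /=.
  by apply: lt_expo_sub; rewrite lt_neqAle v_pm pm_max.
have c_gt0 : 0 < `|c| by rewrite normr_gt0.
apply: eventually_mono (epeval_small S_decay c_gt0) => m S_m.
rewrite epeval_L mulrA pmulr_lgt0 ?expmono_gt0 // mulrDr -expr2 -real_normK ?num_real //.
move: S_m; rewrite -(ltr_pM2l c_gt0); have := ler_norm (- (c * epeval S m)).
by rewrite normrN normrM expr2; lra.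
Qed.

Lemma epeval_sign L : (exists p, ecoef L p != 0) ->
  eventually (fun m => 0 < epeval L m) \/ eventually (fun m => epeval L m < 0).
Proof.
have [n] := ubnP (size L); elim: n L => // n IH [|t L0] size_lt [p nz_p].
  by move: nz_p; rewrite /ecoef big_nil eqxx.
have [pm pm_in pm_max] := epoly_max_expo t L0; set L := t :: L0 in size_lt nz_p pm_in pm_max *.
have [c0|c_neq0] := eqVneq (ecoef L pm) 0; last first.
  have dom := epeval_dominant pm_max c_neq0.
  case/orP: (lt_total c_neq0) => c_sgn; [right|left]; apply: eventually_mono dom => m.
    by rewrite (nmulr_rgt0 _ c_sgn).
  by rewrite (pmulr_rgt0 _ c_sgn).
set R := [seq u <- L | u.1 != pm].
have R_lt : (size R < n)%N by rewrite -ltnS (leq_trans _ size_lt) // ltnS size_filter_neq.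
have R_nz : exists q, ecoef R q != 0.
  by exists p; rewrite ecoef_filter; case: ifP => // /eqP p_pm; move: nz_p; rewrite p_pm c0 eqxx.
by case: (IH R R_lt R_nz) => ev_sign; [left|right];
  apply: eventually_mono ev_sign => m; rewrite (epeval_split L pm) c0 mul0r add0r.
Qed.

Lemma epeval_trichotomy L : (forall m, epeval L m = 0) \/
  eventually (fun m => 0 < epeval L m) \/ eventually (fun m => epeval L m < 0).
Proof.
have [nz|all0] := pselect (exists p, ecoef L p != 0); first by right; apply: epeval_sign.
by left; apply: epeval_coef0 => p; apply: contrapT => /eqP nz; apply: all0; exists p.
Qed.

Lemma ecoef_frequently0 L :
  frequently (fun m => epeval L m = 0) -> forall p, ecoef L p = 0.
Proof.
move=> freq0 p; apply: contrapT => /eqP nz.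
by case: (epeval_sign (ex_intro _ p nz)) => /eventually_frequently/(_ freq0)[m [sgn zero]];
  move: sgn; rewrite zero ltxx.
Qed.

Lemma epeval_parity_sep E O : has_parity false E -> has_parity true O ->
  frequently (fun m => epeval E m = epeval O m) -> forall m, epeval O m = 0.
Proof.
move=> parE parO freq; apply: epeval_coef0 => p.
have diff0 : frequently (fun m => epeval (E ++ epopp O) m = 0).
  by apply: frequently_mono freq => m; rewrite epeval_cat epevalN => ->; rewrite subrr.
have := ecoef_frequently0 diff0 p; rewrite ecoef_cat ecoefN.
case: (boolP (expo_odd p)) => p_odd.
  by rewrite (ecoef_parity parE) ?p_odd // add0r => /eqP; rewrite oppr_eq0 => /eqP.
by move=> _; apply: (ecoef_parity parO); case: expo_odd p_odd.
Qed.

End ExpPoly.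

(** * The ring of eventually compared sequences *)

Section EventualSequences.
Variables (F : archiRealFieldType) (G : rates F).

Definition representable (b : bool) (f : nat -> int) :=
  exists2 L, has_parity b L & forall m, (f m)%:~R = epeval G L m.

Lemma eq_representable b f g : f =1 g -> representable b f -> representable b g.
Proof. by move=> /funext ->. Qed.

Record eseq := ESeq { eseq_val :> nat -> int; eseq_rep : representable false eseq_val }.

Lemma eseq_inj (x y : eseq) : (forall m, x m = y m) -> x = y.
Proof.
case: x y => f rf [g rg] /= /funext fg; subst g.
by congr ESeq; apply: Prop_irrelevance.
Qed.

HB.instance Definition _ := gen_eqMixin eseq.
HB.instance Definition _ := gen_choiceMixin eseq.

Lemma representable_const (z : int) : representable false (fun=> z).
Proof. by exists (epconst z%:~R) => // m; rewrite epeval_const. Qed.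

Lemma representableN b f : representable b f -> representable b (fun m => - f m).
Proof.
case=> L parL fL; exists (epopp L); first exact: has_parityN.
by move=> m; rewrite epevalN -fL mulrNz.
Qed.

Lemma representableD b f g : representable b f -> representable b g ->
  representable b (fun m => f m + g m).
Proof.
case=> L1 par1 f1 [L2 par2 g2]; exists (L1 ++ L2); first exact: has_parity_cat.
by move=> m; rewrite epeval_cat -f1 -g2 intrD.
Qed.

Lemma representableM b1 b2 f g : representable b1 f -> representable b2 g ->
  representable (b1 (+) b2) (fun m => f m * g m).
Proof.
case=> L1 par1 f1 [L2 par2 g2]; exists (epmul L1 L2); first exact: has_parityM par1 par2.
by move=> m; rewrite epevalM -f1 -g2 intrM.
Qed.

Definition eseq_const z := ESeq (representable_const z).
Definition eseq_opp (x : eseq) := ESeq (representableN (eseq_rep x)).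
Definition eseq_add (x y : eseq) := ESeq (representableD (eseq_rep x) (eseq_rep y)).
Definition eseq_mul (x y : eseq) := ESeq (representableM (eseq_rep x) (eseq_rep y)).

Lemma eseq_addA : associative eseq_add.
Proof. by move=> x y z; apply: eseq_inj => m /=; rewrite addrA. Qed.
Lemma eseq_addC : commutative eseq_add.
Proof. by move=> x y; apply: eseq_inj => m /=; rewrite addrC. Qed.
Lemma eseq_add0 : left_id (eseq_const 0) eseq_add.
Proof. by move=> x; apply: eseq_inj => m /=; rewrite add0r. Qed.
Lemma eseq_addN : left_inverse (eseq_const 0) eseq_opp eseq_add.
Proof. by move=> x; apply: eseq_inj => m /=; rewrite addNr. Qed.

HB.instance Definition _ :=
  GRing.isZmodule.Build eseq eseq_addA eseq_addC eseq_add0 eseq_addN.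

Lemma eseq_mulA : associative eseq_mul.
Proof. by move=> x y z; apply: eseq_inj => m /=; rewrite mulrA. Qed.
Lemma eseq_mulC : commutative eseq_mul.
Proof. by move=> x y; apply: eseq_inj => m /=; rewrite mulrC. Qed.
Lemma eseq_mul1 : left_id (eseq_const 1) eseq_mul.
Proof. by move=> x; apply: eseq_inj => m /=; rewrite mul1r. Qed.
Lemma eseq_mulD : left_distributive eseq_mul eseq_add.
Proof. by move=> x y z; apply: eseq_inj => m /=; rewrite mulrDl. Qed.
Lemma eseq_one_neq0 : eseq_const 1 != eseq_const 0.
Proof. by apply/eqP => /(congr1 (fun x : eseq => x 0%N)). Qed.

HB.instance Definition _ := GRing.Zmodule_isComNzRing.Build eseq
  eseq_mulA eseq_mulC eseq_mul1 eseq_mulD eseq_one_neq0.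

Lemma eseqD (x y : eseq) m : (x + y) m = x m + y m. Proof. by []. Qed.
Lemma eseqN (x : eseq) m : (- x) m = - x m. Proof. by []. Qed.
Lemma eseqB (x y : eseq) m : (x - y) m = x m - y m. Proof. by []. Qed.
Lemma eseqM (x y : eseq) m : (x * y) m = x m * y m. Proof. by []. Qed.
Lemma eseq0 m : (0 : eseq) m = 0. Proof. by []. Qed.
Lemma eseq1 m : (1 : eseq) m = 1. Proof. by []. Qed.
Lemma eseq_natr (n : nat) m : (n%:R : eseq) m = n%:Z.
Proof. by elim: n => // n IH; rewrite !mulrS eseqD IH. Qed.

Lemma eseq_sign (x : eseq) :
  x = 0 \/ eventually (fun m => 0 < x m) \/ eventually (fun m => x m < 0).
Proof.
case: x => f [L parL fL]; have := epeval_trichotomy G L.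
case=> [L0|[pos|neg]]; [left|right; left|right; right].
- by apply: eseq_inj => m /=; apply/eqP; rewrite -(intr_eq0 F) fL L0.
- by apply: eventually_mono pos => m /=; rewrite -fL ltr0z.
- by apply: eventually_mono neg => m /=; rewrite -fL ltrz0.
Qed.

Lemma eseq_frequently0 (x : eseq) : frequently (fun m => x m = 0) -> x = 0.
Proof.
move=> freq0; case: (eseq_sign x) => [//|[]] /eventually_frequently/(_ freq0)[m [sgn zero]];
  by move: sgn; rewrite zero ltxx.
Qed.

Lemma eseq_eventually0 (x : eseq) : eventually (fun m => x m = 0) -> x = 0.
Proof.
by case=> M xM; apply: eseq_frequently0 => N; exists (maxn M N); rewrite ?leq_maxr ?xM ?leq_maxl.
Qed.

Lemma eseq_neq0 (x : eseq) : x != 0 -> eventually (fun m => x m != 0).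
Proof.
case: (eseq_sign x) => [->|[]]; rewrite ?eqxx // => ev_sign _;
  by apply: eventually_mono ev_sign => m sgn; rewrite ?(gt_eqF sgn) ?(lt_eqF sgn).
Qed.

Lemma eseq_eventually_eq (x y : eseq) : eventually (fun m => x m = y m) -> x = y.
Proof.
move=> xy; apply/eqP; rewrite -subr_eq0; apply/eqP/eseq_eventually0.
by apply: eventually_mono xy => m; rewrite eseqB => ->; rewrite subrr.
Qed.

Definition eseq_unit : {pred eseq} := fun x => `[< x = 1 \/ x = -1 >].

Lemma eseq_mulVx : {in eseq_unit, left_inverse 1 id *%R}.
Proof. by move=> x /asboolP[] ->; rewrite ?mulr1 ?mulrNN ?mulr1. Qed.

Lemma eseq_unitPl (x y : eseq) : y * x = 1 -> eseq_unit x.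
Proof.
move=> yx1; apply/asboolP.
have unit_m m : x m = 1 \/ x m = -1.
  have := congr1 (fun z : eseq => z m) yx1; rewrite eseqM eseq1.
  by move=> /intUnitRing.unitzPl /orP[] /eqP; [left|right].
have [/eqP|x_neq1] := eqVneq (x - 1) 0; first by rewrite subr_eq0 => /eqP; left.
right; apply: eseq_eventually_eq; apply: eventually_mono (eseq_neq0 x_neq1) => m.
by rewrite eseqB eseq1 eseqN eseq1; case: (unit_m m) => ->; rewrite ?subrr ?eqxx.
Qed.

Lemma eseq_inv_out : {in [predC eseq_unit], id =1 id}.
Proof. by []. Qed.

HB.instance Definition _ :=
  GRing.ComNzRing_hasMulInverse.Build eseq eseq_mulVx eseq_unitPl eseq_inv_out.

Lemma eseq_integral : GRing.integral_domain_axiom eseq.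
Proof.
move=> x y xy0; apply: contraTT isT; rewrite negb_or => /andP[x_neq0 y_neq0].
have [m [xm ym]] := eventually_ex (eventually_and (eseq_neq0 x_neq0) (eseq_neq0 y_neq0)).
have := congr1 (fun z : eseq => z m) xy0; rewrite eseqM eseq0 => /eqP.
by rewrite mulf_eq0 (negbTE xm) (negbTE ym).
Qed.

HB.instance Definition _ := GRing.ComUnitRing_isIntegral.Build eseq eseq_integral.

Definition eseq_le (x y : eseq) := `[< eventually (fun m => x m <= y m) >].
Definition eseq_lt (x y : eseq) := (y != x) && eseq_le x y.
Definition eseq_norm (x : eseq) := if eseq_le 0 x then x else - x.

Lemma eseq_leP (x y : eseq) : reflect (eventually (fun m => x m <= y m)) (eseq_le x y).
Proof. exact: asboolP. Qed.

Lemma eseq_le_sign (x : eseq) :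
  x = 0 \/ (eseq_le 0 x /\ ~~ eseq_le x 0) \/ (eseq_le x 0 /\ ~~ eseq_le 0 x).
Proof.
case: (eseq_sign x) => [->|[pos|neg]]; [left | right; left | right; right] => //.
  split; first by apply/eseq_leP; apply: eventually_mono pos => m /ltW.
  apply/eseq_leP => /eventually_and/(_ pos)/eventually_ex[m [x_le0 x_gt0]].
  by have := lt_le_trans x_gt0 x_le0; rewrite ltxx.
split; first by apply/eseq_leP; apply: eventually_mono neg => m /ltW.
apply/eseq_leP => /eventually_and/(_ neg)/eventually_ex[m [x_ge0 x_lt0]].
by have := le_lt_trans x_ge0 x_lt0; rewrite ltxx.
Qed.

Lemma eseq_le0_add (x y : eseq) : eseq_le 0 x -> eseq_le 0 y -> eseq_le 0 (x + y).
Proof.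
move=> /eseq_leP x_ge0 /eseq_leP y_ge0; apply/eseq_leP.
by apply: eventually_mono (eventually_and x_ge0 y_ge0) => m []; apply: addr_ge0.
Qed.

Lemma eseq_le0_mul (x y : eseq) : eseq_le 0 x -> eseq_le 0 y -> eseq_le 0 (x * y).
Proof.
move=> /eseq_leP x_ge0 /eseq_leP y_ge0; apply/eseq_leP.
by apply: eventually_mono (eventually_and x_ge0 y_ge0) => m []; apply: mulr_ge0.
Qed.

Lemma eseq_le0_anti (x : eseq) : eseq_le 0 x -> eseq_le x 0 -> x = 0.
Proof.
move=> /eseq_leP x_ge0 /eseq_leP x_le0; apply: eseq_eventually0.
by apply: eventually_mono (eventually_and x_ge0 x_le0) => m [? ?]; apply: le_anti; apply/andP.
Qed.

Lemma eseq_sub_ge0 (x y : eseq) : eseq_le 0 (y - x) = eseq_le x y.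
Proof.
by apply/eseq_leP/eseq_leP; apply: eventually_mono => m; rewrite eseqB eseq0 subr_ge0.
Qed.

Lemma eseq_le0_total (x : eseq) : eseq_le 0 x || eseq_le x 0.
Proof.
case: (eseq_le_sign x) => [->|[[-> _]|[-> _]]]; rewrite ?orbT //.
by apply/orP; left; apply/eseq_leP/eventuallyT.
Qed.

Lemma eseq_normN (x : eseq) : eseq_norm (- x) = eseq_norm x.
Proof.
rewrite /eseq_norm -[X in eseq_le 0 X]sub0r eseq_sub_ge0 opprK.
case: (eseq_le_sign x) => [->|[[-> /negbTE ->]|[-> /negbTE ->]]] //.
by rewrite oppr0.
Qed.

Lemma eseq_ge0_norm (x : eseq) : eseq_le 0 x -> eseq_norm x = x.
Proof. by rewrite /eseq_norm => ->. Qed.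

Lemma eseq_lt_def (x y : eseq) : eseq_lt x y = (y != x) && eseq_le x y.
Proof. by []. Qed.

HB.instance Definition _ := Num.IntegralDomain_isLeReal.Build eseq
  eseq_le0_add eseq_le0_mul eseq_le0_anti eseq_sub_ge0 eseq_le0_total
  eseq_normN eseq_ge0_norm eseq_lt_def.

Lemma eseq_le_eventually (x y : eseq) : (x <= y) <-> eventually (fun m => x m <= y m).
Proof. by split => /eseq_leP. Qed.

Lemma eseq_eventually_neq_odd (x : eseq) (f : nat -> int) m0 :
  representable true f -> f m0 != 0 -> eventually (fun m => x m != f m).
Proof.
case: x => g [E parE gE] [O parO fO] f_m0.
case: (eventually_or_frequently_not (fun m => g m != f m)) => // /= freq; exfalso.
have O0 := epeval_parity_sep parE parO (frequently_mono _ freq).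
move: f_m0; rewrite -(intr_eq0 F) fO O0 ?eqxx // => m /negP; rewrite negbK => /eqP gf.
by rewrite -gE -fO gf.
Qed.

End EventualSequences.

Section Model.
Variables (F : archiRealFieldType) (G : rates F).
Local Notation R := (eseq G).

Lemma eseq_discrete : discrete R.
Proof.
move=> x; rewrite lt_def => /andP[x_neq0 /eseq_le_eventually x_ge0].
apply/eseq_le_eventually.
apply: eventually_mono (eventually_and (eseq_neq0 x_neq0) x_ge0) => m [xm_neq0].
by rewrite eseq0 eseq1; lia.
Qed.

Lemma eseq_eq_decided (x y : R) : eventually (fun m => x m = y m <-> x = y).
Proof.
case: (eseq_sign (x - y)) => [/eqP|[] sgn].
  by rewrite subr_eq0 => /eqP <-; apply: eventuallyT.
all: apply: eventually_mono sgn => m; rewrite eseqB => sgn.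
all: by split=> xy; move: sgn; rewrite xy subrr ltxx.
Qed.

Lemma eseq_le_decided (x y : R) : eventually (fun m => x m <= y m <-> x <= y).
Proof.
case: (eseq_sign (y - x)) => [/eqP|[sgn|sgn]].
- by rewrite subr_eq0 => /eqP ->; apply: eventuallyT => m; rewrite !lexx.
- have x_le_y : x <= y.
    by apply/eseq_le_eventually; apply: eventually_mono sgn => m; rewrite eseqB subr_gt0 => /ltW.
  by apply: eventually_mono sgn => m; rewrite eseqB subr_gt0 => /ltW.
- have x_nle_y : ~ x <= y.
    move=> /eseq_le_eventually/eventually_and/(_ sgn)/eventually_ex[m []].
    by rewrite eseqB subr_lt0 => /le_lt_trans/[apply]; rewrite ltxx.
  apply: eventually_mono sgn => m; rewrite eseqB subr_lt0 => yx; split=> // xy.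
  by have := le_lt_trans xy yx; rewrite ltxx.
Qed.

Section Assignment.
Variable e : nat -> R.
Hypothesis e_ge0 : forall i, 0 <= e i.
Let e_at m i := `|e i m|%N.

Lemma teval_eventually t : eventually (fun m =>
  (teval 0%N 1%N addn muln (e_at m) t)%:Z = teval 0 1 +%R *%R e t m).
Proof.
elim: t => [i|||t1 IH1 t2 IH2|t1 IH1 t2 IH2] /=; try exact: eventuallyT.
- by apply: eventually_mono (proj1 (eseq_le_eventually _ _) (e_ge0 i)) => m /gez0_abs.
- by apply: eventually_mono (eventually_and IH1 IH2) => m [h1 h2]; rewrite PoszD h1 h2.
- by apply: eventually_mono (eventually_and IH1 IH2) => m [h1 h2]; rewrite PoszM h1 h2.
Qed.

Lemma feval_eventually f : eventually (fun m =>
  feval 0%N 1%N addn muln (fun a b => (a <= b)%N) (e_at m) f <->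
  feval 0 1 +%R *%R (fun a b : R => a <= b) e f).
Proof.
elim: f => [t1 t2|t1 t2|f IH|f1 IH1 f2 IH2|f1 IH1 f2 IH2|f1 IH1 f2 IH2] /=.
- have ev := eventually_and (eventually_and (teval_eventually t1) (teval_eventually t2))
    (eseq_eq_decided (teval 0 1 +%R *%R e t1) (teval 0 1 +%R *%R e t2)).
  by apply: eventually_mono ev => m [[h1 h2] <-]; rewrite -h1 -h2; split=> [->|[]].
- have ev := eventually_and (eventually_and (teval_eventually t1) (teval_eventually t2))
    (eseq_le_decided (teval 0 1 +%R *%R e t1) (teval 0 1 +%R *%R e t2)).
  by apply: eventually_mono ev => m [[h1 h2] <-]; rewrite -h1 -h2 lez_nat.
- by apply: eventually_mono IH => m [? ?]; split=> nf ?; apply: nf; auto.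
- by apply: eventually_mono (eventually_and IH1 IH2) => m [[? ?] [? ?]]; split=> -[]; auto.
- by apply: eventually_mono (eventually_and IH1 IH2) => m [[? ?] [? ?]]; split=> -[]; auto.
- by apply: eventually_mono (eventually_and IH1 IH2) => m [[? ?] [? ?]]; split; auto.
Qed.

End Assignment.

Lemma eseq_models_T : models_T R.
Proof.
split=> [|f f_true e e_ge0]; first exact: eseq_discrete.
by have [m [+ _]] := eventually_ex (feval_eventually e_ge0 f); apply; apply: f_true.
Qed.

End Model.

(** * Words in A and B *)

Section MatrixAlgebra.
Variable R : realDomainType.
Implicit Types X Y Z : mat R.

Definition det X : R := m00 X * m11 X - m01 X * m10 X.

Lemma mat_eq X Y :
  m00 X = m00 Y -> m01 X = m01 Y -> m10 X = m10 Y -> m11 X = m11 Y -> X = Y.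
Proof. by case: X Y => ? ? ? ? [? ? ? ?] /= -> -> -> ->. Qed.

Lemma mmulA X Y Z : mmul X (mmul Y Z) = mmul (mmul X Y) Z.
Proof. by case: X Y Z => ? ? ? ? [? ? ? ?] [? ? ? ?]; apply: mat_eq => /=; ring. Qed.

Lemma mmul1 X : mmul (matI R) X = X.
Proof. by case: X => ? ? ? ?; apply: mat_eq => /=; ring. Qed.

Lemma mmulr1 X : mmul X (matI R) = X.
Proof. by case: X => ? ? ? ?; apply: mat_eq => /=; ring. Qed.

Lemma detM X Y : det (mmul X Y) = det X * det Y.
Proof. by case: X Y => ? ? ? ? [? ? ? ?]; rewrite /det /=; ring. Qed.

Lemma det_minv X : det (minv X) = det X.
Proof. by case: X => ? ? ? ?; rewrite /det /=; ring. Qed.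

Lemma mmul_minv X : det X = 1 -> mmul X (minv X) = matI R.
Proof.
by case: X => a b c d; rewrite /det /= => dX; apply: mat_eq; rewrite /= -?dX; ring.
Qed.

Lemma minv_mmul X : det X = 1 -> mmul (minv X) X = matI R.
Proof.
by case: X => a b c d; rewrite /det /= => dX; apply: mat_eq; rewrite /= -?dX; ring.
Qed.

Lemma mmulK X Y : det X = 1 -> mmul (minv X) (mmul X Y) = Y.
Proof. by move=> dX; rewrite mmulA minv_mmul // mmul1. Qed.

Lemma mmulVK X Y : det X = 1 -> mmul X (mmul (minv X) Y) = Y.
Proof. by move=> dX; rewrite mmulA mmul_minv // mmul1. Qed.

Lemma mmulrK X Y : det X = 1 -> mmul (mmul Y X) (minv X) = Y.
Proof. by move=> dX; rewrite -mmulA mmul_minv // mmulr1. Qed.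

Lemma mmulrVK X Y : det X = 1 -> mmul (mmul Y (minv X)) X = Y.
Proof. by move=> dX; rewrite -mmulA minv_mmul // mmulr1. Qed.

Lemma sl2pE X : sl2p X <-> nonneg X /\ det X = 1.
Proof. by split=> [[? ? ? ? ?] | [[? ? ? ?] ?]]. Qed.

Lemma mle_mmulr X Y : nonneg X -> nonneg Y -> 1 <= m00 Y -> 1 <= m11 Y ->
  mle X (mmul X Y).
Proof. by case: X Y => ? ? ? ? [? ? ? ?] [/= ? ? ? ?] [/= ? ? ? ?] ? ?; split=> /=; nra. Qed.

End MatrixAlgebra.

Section Words.
Local Notation M := (mat int).

Definition word_mat (w : seq bool) : M :=
  foldr (fun b X => mmul (if b then matB int else matA int) X) (matI int) w.

Lemma word_mat_cons b u :
  word_mat (b :: u) = mmul (if b then matB int else matA int) (word_mat u).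
Proof. by []. Qed.

Lemma word_mat_cat u v : word_mat (u ++ v) = mmul (word_mat u) (word_mat v).
Proof. by elim: u => [|b u IH] /=; rewrite ?mmul1 // IH mmulA. Qed.

Lemma word_mat_sl2p w : sl2p (word_mat w).
Proof.
elim: w => [|b w [? ? ? ? dw]] /=; first by [].
by case: b; rewrite /sl2p /matB /matA /=; split; nra.
Qed.

Lemma word_mat_det w : det (word_mat w) = 1.
Proof. by case: (word_mat_sl2p w). Qed.

Lemma word_mat_nonneg w : nonneg (word_mat w).
Proof. by case: (word_mat_sl2p w). Qed.

Lemma word_mat_diag w : 1 <= m00 (word_mat w) /\ 1 <= m11 (word_mat w).
Proof.
elim: w => [|b w [? ?]] //=; have [? ? ? ? _] := word_mat_sl2p w.
by case: b; rewrite /matB /matA /=; lra.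
Qed.

Lemma word_mat_head_neq b c u v : b != c ->
  word_mat (b :: u) <> word_mat (c :: v).
Proof.
have [? ? ? ? ?] := word_mat_sl2p u; have [? ? ? ? ?] := word_mat_sl2p v.
by case: b; case: c => //= _ /(congr1 (fun X => (m00 X, m01 X, m10 X, m11 X)));
  rewrite /matB /matA /= => -[]; nra.
Qed.

Lemma word_mat_nil_neq b u : word_mat [::] <> word_mat (b :: u).
Proof.
have [? ? ? ? ?] := word_mat_sl2p u.
by case: b => /(congr1 (fun X => (m00 X, m01 X, m10 X, m11 X)));
  rewrite /matB /matA /= => -[]; nra.
Qed.

Lemma word_mat_inj : injective word_mat.
Proof.
elim=> [|b u IH] [|c v] //; first by move/word_mat_nil_neq.
  by move/esym/word_mat_nil_neq.
have [<-|b_neq_c] := eqVneq b c; last by move=> /(word_mat_head_neq b_neq_c).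
set X := if b then matB int else matA int; have det_X : det X = 1 by rewrite /X; case: ifP.
rewrite !word_mat_cons => /(congr1 (mmul (minv X))).
by rewrite !mmulK // => /IH ->.
Qed.

Lemma sl2p_intE (X : M) : sl2p X <->
  [/\ 0 <= m00 X, 0 <= m01 X, 0 <= m10 X, 0 <= m11 X
    & m00 X * m11 X - m01 X * m10 X = 1].
Proof. by []. Qed.

(* SL_2(N) is freely generated by A and B: one of the two rows dominates the
   other, and subtracting it is left division by A or B. *)
Lemma word_mat_surj X : sl2p X -> exists w, X = word_mat w.
Proof.
have [n] := ubnP (absz (m00 X + m01 X + m10 X + m11 X)).
elim: n X => // n IH [p q r s] /= size_lt /sl2p_intE[/= p0 q0 r0 s0 det1].
have [/and4P[/eqP-> /eqP-> /eqP-> /eqP->]|X_neqI] :=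
  boolP [&& p == 1, q == 0, r == 0 & s == 1]; first by exists [::].
have [[rp sq]|[pr qs]] : (r <= p /\ s <= q) \/ (p <= r /\ q <= s).
  by move: X_neqI; rewrite !negb_and; nia.
- have sl2_X' : sl2p (Mat (p - r) (q - s) r s) by apply/sl2p_intE; split=> /=; nia.
  have [/=|w X'_w] := IH _ _ sl2_X'; first nia.
  by exists (false :: w); rewrite word_mat_cons -X'_w; apply: mat_eq; rewrite /=; ring.
- have sl2_X' : sl2p (Mat p q (r - p) (s - q)) by apply/sl2p_intE; split=> /=; nia.
  have [/=|w X'_w] := IH _ _ sl2_X'; first nia.
  by exists (true :: w); rewrite word_mat_cons -X'_w; apply: mat_eq; rewrite /=; ring.
Qed.

Lemma nonneg_det1_word X : nonneg X -> det X = 1 -> exists w, X = word_mat w.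
Proof. by move=> X0 dX; apply: word_mat_surj; apply/sl2pE. Qed.

Lemma ur_word_mat v : ur (word_mat v) <-> head true v.
Proof.
split=> [[/(@word_mat_inj _ [::]) -> // | B_v] | ].
  have [v' v'E] : exists v', mmul (minv (matB int)) (word_mat v) = word_mat v'.
    by apply: nonneg_det1_word B_v _; rewrite detM det_minv word_mat_det.
  have : word_mat v = word_mat (true :: v') by rewrite word_mat_cons -v'E mmulVK.
  by move/word_mat_inj ->.
case: v => [|[] v] // _; first by left.
by right; rewrite /prec_i word_mat_cons mmulK //; apply: word_mat_nonneg.
Qed.

Definition code_word (k : nat) : seq bool := true :: nseq k false.
Definition code_words (ks : seq nat) : seq bool := flatten (map code_word ks).
Definition code (ks : seq nat) : M := word_mat (code_words ks).

Lemma code_words_cat s t : code_words (s ++ t) = code_words s ++ code_words t.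
Proof. by rewrite /code_words map_cat flatten_cat. Qed.

Lemma code_cat s t : code (s ++ t) = mmul (code s) (code t).
Proof. by rewrite /code code_words_cat word_mat_cat. Qed.

Lemma code_words_rcons s k : code_words (rcons s k) = code_words s ++ code_word k.
Proof. by rewrite -cats1 code_words_cat /code_words /= cats0. Qed.

Lemma mcode_word (k : nat) : mcode k%:Z = word_mat (code_word k).
Proof.
have A_pow j : word_mat (nseq j false) = Mat 1 j%:Z 0 1.
  elim: j => [|j IH] //; rewrite -addn1 nseqD word_mat_cat IH.
  by apply: mat_eq; rewrite /= ?PoszD; ring.
by rewrite word_mat_cons A_pow; apply: mat_eq; rewrite /= ?mul0r ?add0r ?addr0 ?mul1r ?mulr1.
Qed.

Lemma code1 k : code [:: k] = mcode k%:Z.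
Proof. by rewrite mcode_word /code /code_words /= cats0. Qed.

Lemma code_rcons s k : code (rcons s k) = mmul (code s) (mcode k%:Z).
Proof. by rewrite -cats1 code_cat code1. Qed.

Lemma code_sl2p ks : sl2p (code ks).
Proof. exact: word_mat_sl2p. Qed.

Lemma code_det ks : det (code ks) = 1.
Proof. exact: word_mat_det. Qed.

Lemma mcode_det (k : nat) : det (mcode k%:Z) = 1.
Proof. by rewrite mcode_word word_mat_det. Qed.

Lemma head_code_words ks : head true (code_words ks).
Proof. by case: ks. Qed.

Lemma ur_code ks : ur (code ks).
Proof. exact/ur_word_mat/head_code_words. Qed.

Lemma nseq_false_split k u v z : u ++ v = nseq k false ++ z ->
  head true v -> head true z -> exists2 u', u = nseq k false ++ u' & u' ++ v = z.
Proof.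
elim: k u => [|k IH] [|c u] /=.
- by move=> <-; exists [::].
- by move=> <-; exists (c :: u).
- by move=> ->.
by case=> -> uv v_ur z_ur; have [u' -> u'v] := IH u uv v_ur z_ur; exists u'.
Qed.

Lemma code_words_split ks u v : u ++ v = code_words ks -> head true v ->
  exists s t, ks = s ++ t /\ u = code_words s.
Proof.
elim: ks u => [|k ks IH] [|b u] uv v_ur; try by exists [::], [::].
- by exists [::], (k :: ks).
case: uv => -> /nseq_false_split/(_ v_ur (head_code_words ks)) [u' -> /IH/(_ v_ur)].
by case=> [s [t [-> ->]]]; exists (k :: s), t.
Qed.

Lemma code_word_last_inj y y' n k : y ++ code_word n = y' ++ code_word k -> n = k.
Proof.
move/(congr1 rev); rewrite !rev_cat /code_word !rev_cons !rev_nseq.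
by elim: n k => [|n IH] [|k] //= [] /IH ->.
Qed.

Lemma occ_code ks (a : M) (n : int) : sl2p a -> 0 <= n -> occ a n (code ks) ->
  exists s k t, [/\ ks = rcons s k ++ t, a = code (rcons s k) & n = k%:Z].
Proof.
move=> /word_mat_surj[u ->]; case: n => // n _ [[rest_nonneg _ ur_rest] [init_nonneg _ _]].
have [v vE] : exists v, mmul (minv (word_mat u)) (code ks) = word_mat v.
  by apply: nonneg_det1_word; rewrite // detM det_minv code_det word_mat_det.
have [y yE] : exists y, mmul (word_mat u) (minv (mcode n%:Z)) = word_mat y.
  by apply: nonneg_det1_word; rewrite // detM det_minv mcode_det word_mat_det.
have uv : u ++ v = code_words ks.
  by apply: word_mat_inj; rewrite word_mat_cat -vE mmulVK ?word_mat_det.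
have uy : u = y ++ code_word n.
  by apply: word_mat_inj; rewrite word_mat_cat -yE -mcode_word mmulrVK // mcode_word word_mat_det.
move: ur_rest; rewrite vE => /ur_word_mat/(code_words_split uv)[s0 [t [ksE uE]]].
case/lastP: s0 ksE uE => [|s k] ksE uE; first by move: uE; rewrite uy; case: (y).
exists s, k, t; split=> //; first by rewrite /code -uE.
by move: uE; rewrite uy code_words_rcons => /code_word_last_inj ->.
Qed.

Lemma occ_code_prefix s k t : occ (code (rcons s k)) k%:Z (code (rcons s k ++ t)).
Proof.
have ur_mcode : ur (mcode k%:Z) by rewrite mcode_word; apply/ur_word_mat.
rewrite /occ /prec_iu /prec_eu /prec_i /prec_e code_cat mmulK ?code_det //.
rewrite [in mmul (code _) _]code_rcons mmulrK ?mcode_det //.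
by split; split; solve [exact: word_mat_nonneg | exact: ur_code | done].
Qed.

Lemma code_le_cat s t : mle (code s) (code (s ++ t)).
Proof.
rewrite code_cat; have [? ?] := word_mat_diag (code_words t).
by apply: mle_mmulr => //; apply: word_mat_nonneg.
Qed.

Lemma code_neq_cat s t : t != [::] -> code s <> code (s ++ t).
Proof.
case: t => // k t _ /word_mat_inj/(congr1 size).
by rewrite code_words_cat size_cat -[X in X = _]addn0 => /addnI.
Qed.

End Words.

(** * Powers of a code matrix *)

Definition ent (R : realDomainType) (X : mat R) (i j : bool) : R :=
  match i, j with
  | false, false => m00 X | false, true => m01 X
  | true, false => m10 X | true, true => m11 X
  end.

Lemma ent_mmul (R : realDomainType) (X Y : mat R) i j :
  ent (mmul X Y) i j = ent X i false * ent Y false j + ent X i true * ent Y true j.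
Proof. by case: i; case: j. Qed.

Lemma two_term_recurrence (K : fieldType) (e f : K) (s : nat -> K) : e != f ->
  (forall n, s n.+2 = (e + f) * s n.+1 - e * f * s n) ->
  forall n, s n = (s 1%N - f * s 0%N) / (e - f) * e ^+ n + (e * s 0%N - s 1%N) / (e - f) * f ^+ n.
Proof.
move=> e_neq_f rec; have ef_neq0 : e - f != 0 by rewrite subr_eq0.
pose closed n := (s 1%N - f * s 0%N) / (e - f) * e ^+ n + (e * s 0%N - s 1%N) / (e - f) * f ^+ n.
suff both n : s n = closed n /\ s n.+1 = closed n.+1 by move=> n; case: (both n).
elim: n => [|n [IHn IHn1]]; first by split; rewrite /closed ?expr0 ?expr1; field.
by split=> //; rewrite rec IHn IHn1 /closed !exprS; field.
Qed.

Lemma code_nseqS k n : code (nseq n.+1 k) = mmul (mcode k%:Z) (code (nseq n k)).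
Proof. by rewrite -code1 -code_cat. Qed.

Lemma mcode_cayley_hamilton (k : nat) (Y : mat int) i j :
  ent (mmul (mcode k%:Z) (mmul (mcode k%:Z) Y)) i j =
  (k + 2)%:R * ent (mmul (mcode k%:Z) Y) i j - ent Y i j.
Proof. by rewrite !ent_mmul; case: i; case: j; rewrite /= natrD; ring. Qed.

Section Eigenvalue.
Local Notation RA := realalg.
Variable k : nat.
Hypothesis k_gt0 : (0 < k)%N.

Let t : RA := (k + 2)%:R.
(* The larger eigenvalue of [k]; the other one is its inverse. *)
Definition eig : RA := (t + Num.sqrt (t ^+ 2 - 4)) / 2.

Lemma eig_gt1 : 1 < eig.
Proof.
have t_ge3 : 3 <= t by rewrite /t ler_nat; lia.
have := sqrtr_ge0 (t ^+ 2 - 4); rewrite /eig ltr_pdivlMr ?ltr0n //; lra.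
Qed.

Lemma eig_inv : eig^-1 = t - eig.
Proof.
have t_ge2 : 2 <= t by rewrite /t ler_nat; lia.
have disc_ge0 : 0 <= t ^+ 2 - 4 by nra.
apply: mulr1_eq; have := sqr_sqrtr disc_ge0; rewrite /eig.
set S := Num.sqrt _ => S2.
have -> : (t + S) / 2 * (t - (t + S) / 2) = (t ^+ 2 - S ^+ 2) / 4 by field.
by rewrite S2; field.
Qed.

Lemma code_pow_exp i j : exists a b : RA, forall n,
  (ent (code (nseq n k)) i j)%:~R = a * eig ^+ n + b * (eig ^+ n)^-1.
Proof.
have eig_gt0 : 0 < eig := lt_trans ltr01 eig_gt1.
have eig_neq0 : eig != 0 by rewrite gt_eqF.
have eig_neq_inv : eig != eig^-1.
  by rewrite gt_eqF // (lt_trans _ eig_gt1) // invf_lt1 // eig_gt1.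
set s := fun n => (ent (code (nseq n k)) i j)%:~R : RA.
have rec n : s n.+2 = (eig + eig^-1) * s n.+1 - eig * eig^-1 * s n.
  have -> : eig + eig^-1 = t by rewrite eig_inv addrC subrK.
  rewrite mulfV // mul1r /s !code_nseqS.
  by rewrite mcode_cayley_hamilton intrB intrM natz -code_nseqS.
exists ((s 1%N - eig^-1 * s 0%N) / (eig - eig^-1)), ((eig * s 0%N - s 1%N) / (eig - eig^-1)).
by move=> n; rewrite -/(s n) (two_term_recurrence eig_neq_inv rec n) exprVn.
Qed.

End Eigenvalue.

(** * The nonstandard proof *)

Section Transfer.
Variables (F : archiRealFieldType) (G : rates F).
Local Notation R := (eseq G).
Implicit Types X Y : mat R.

Definition mat_at (m : nat) X : mat int :=
  Mat (m00 X m) (m01 X m) (m10 X m) (m11 X m).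

Lemma mat_at_mmul m X Y : mat_at m (mmul X Y) = mmul (mat_at m X) (mat_at m Y).
Proof. by []. Qed.
Lemma mat_at_minv m X : mat_at m (minv X) = minv (mat_at m X).
Proof. by []. Qed.
Lemma mat_at_mcode m (n : R) : mat_at m (mcode n) = mcode (n m).
Proof. by []. Qed.
Lemma det_mat_at m X : det (mat_at m X) = det X m.
Proof. by []. Qed.

Definition mat_atE := (mat_at_mmul, mat_at_minv, mat_at_mcode).

Definition eseq_mat (W : nat -> mat int)
    (rep : forall i j, representable G false (fun m => ent (W m) i j)) : mat R :=
  Mat (ESeq (rep false false)) (ESeq (rep false true))
      (ESeq (rep true false)) (ESeq (rep true true)).

Lemma mat_at_eseq_mat W rep m : mat_at m (@eseq_mat W rep) = W m.
Proof. by rewrite /mat_at /=; case: (W m). Qed.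

Lemma mat_at_eq_decided X Y :
  eventually (fun m => mat_at m X = mat_at m Y <-> X = Y).
Proof.
have ev := eventually_and (eventually_and (eseq_eq_decided (m00 X) (m00 Y))
  (eseq_eq_decided (m01 X) (m01 Y))) (eventually_and
  (eseq_eq_decided (m10 X) (m10 Y)) (eseq_eq_decided (m11 X) (m11 Y))).
apply: eventually_mono ev => m [[[e00 _] [e01 _]] [[e10 _] [e11 _]]].
split=> [XY|->] //; case: XY => /e00 ? /e01 ? /e10 ? /e11 ?; exact: mat_eq.
Qed.

Lemma nonneg_eventually X : nonneg X <-> eventually (fun m => nonneg (mat_at m X)).
Proof.
split=> [[/eseq_le_eventually x00 /eseq_le_eventually x01 /eseq_le_eventually x10
  /eseq_le_eventually x11] | X0].
  by apply: eventually_mono (eventually_and (eventually_and x00 x01) (eventually_and x10 x11))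
    => m [[? ?] [? ?]].
by split; apply/eseq_le_eventually; apply: eventually_mono X0 => m [].
Qed.

Lemma mle_eventually X Y :
  mle X Y <-> eventually (fun m => mle (mat_at m X) (mat_at m Y)).
Proof.
split=> [[/eseq_le_eventually x00 /eseq_le_eventually x01 /eseq_le_eventually x10
  /eseq_le_eventually x11] | XY].
  by apply: eventually_mono (eventually_and (eventually_and x00 x01) (eventually_and x10 x11))
    => m [[? ?] [? ?]].
by split; apply/eseq_le_eventually; apply: eventually_mono XY => m [].
Qed.

Lemma ur_eventually X : ur X <-> eventually (fun m => ur (mat_at m X)).
Proof.
split=> [[->|/nonneg_eventually B_X] | ur_X].
- by apply: eventuallyT => m; left.
- by apply: eventually_mono B_X => m; right.
have [-> | X_neqI] := pselect (X = matI R); first by left.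
right; apply/nonneg_eventually.
apply: eventually_mono (eventually_and ur_X (mat_at_eq_decided X (matI R))).
by move=> m [[XI|//] XI_iff]; exfalso; apply/X_neqI/XI_iff.
Qed.

Lemma sl2p_eventually X : sl2p X <-> eventually (fun m => sl2p (mat_at m X)).
Proof.
rewrite sl2pE nonneg_eventually; split=> [[X0 dX] | sl2X].
  by apply: eventually_mono X0 => m X0m; apply/sl2pE; rewrite det_mat_at dX.
split; first by apply: eventually_mono sl2X => m /sl2pE[].
by apply: eseq_eventually_eq; apply: eventually_mono sl2X => m /sl2pE[_]; rewrite det_mat_at.
Qed.

Lemma occ_eventually a (n : R) p :
  occ a n p <-> eventually (fun m => occ (mat_at m a) (n m) (mat_at m p)).
Proof.
rewrite /occ /prec_iu /prec_eu /prec_i /prec_e eventually_andE !eventually_and3E.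
split=> [[[/nonneg_eventually ? /ur_eventually ? /ur_eventually ?]
  [/nonneg_eventually ? /ur_eventually ? /ur_eventually ?]] | [[? ? ?] [? ? ?]]];
  by split; split; first [exact/nonneg_eventually | exact/ur_eventually | done].
Qed.

Lemma eseq_eventually_in2 (n : R) (a b : nat) :
  eventually (fun m => n m = a%:Z \/ n m = b%:Z) -> n = a%:R \/ n = b%:R.
Proof.
move=> ab; have [n_a|] := eventually_or_frequently_not (fun m => n m <> a%:Z).
  right; apply: eseq_eventually_eq; apply: eventually_mono (eventually_and ab n_a).
  by move=> m [[]] // ->; rewrite eseq_natr.
move=> n_a; left; apply/eqP; rewrite -subr_eq0; apply/eqP/eseq_frequently0.
by apply: frequently_mono n_a => m /contrapT; rewrite eseqB eseq_natr => ->; rewrite subrr.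
Qed.

End Transfer.

Lemma rcons_prefix_nseq (T : eqType) (x y : T) m M s t : x != y ->
  rcons s y ++ t = nseq m x ++ nseq M y -> exists i, rcons s y = nseq m x ++ nseq i.+1 y.
Proof.
move=> x_neq_y; elim: m s => [|m IH] [|z s] /=.
- by exists 0%N.
- move=> st; exists (size s).+1.
  have := all_pred1_nseq y M; rewrite -st -cat_cons all_cat => /andP[/all_pred1P -> _].
  by rewrite /= size_rcons.
- by case=> /esym/eqP; rewrite (negbTE x_neq_y).
by case=> -> /IH[i ->]; exists i.
Qed.

Section NonstandardProof.
(* [h] and [g] are the Goedel numbers of [bot -> bot] and of [bot]. *)
Variables h g : nat.
Hypotheses (h_gt0 : (0 < h)%N) (g_gt0 : (0 < g)%N) (h_neq_g : h <> g).

Definition pi_rates := Rates (eig_gt1 h_gt0) (eig_gt1 g_gt0).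
Local Notation R := (eseq pi_rates).
Implicit Types a : mat R.

Definition pi_seq m := nseq m h ++ nseq (m * m) g.

Lemma representable_code_pow_h i j :
  representable pi_rates true (fun m => ent (code (nseq m h)) i j).
Proof.
have [a [b ab]] := code_pow_exp h_gt0 i j.
exists [:: ((0, 1), a); ((0, -1), b)] => // m.
by rewrite ab /epeval !big_cons big_nil /expmono /= !mul0r !expr0z !mul1r mulN1r -exprnN addr0.
Qed.

Lemma representable_code_pow_g i j :
  representable pi_rates true (fun m => ent (code (nseq (m * m) g)) i j).
Proof.
have [a [b ab]] := code_pow_exp g_gt0 i j.
exists [:: ((1, 0), a); ((-1, 0), b)] => // m.
rewrite ab /epeval !big_cons big_nil /expmono /=.
by rewrite !mul0r !expr0z !mulr1 mul1r mulN1r -exprnN addr0.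
Qed.

Lemma representable_pi i j : representable pi_rates false (fun m => ent (code (pi_seq m)) i j).
Proof.
apply: (eq_representable (f := fun m =>
  ent (code (nseq m h)) i false * ent (code (nseq (m * m) g)) false j +
  ent (code (nseq m h)) i true * ent (code (nseq (m * m) g)) true j)).
  by move=> m; rewrite /pi_seq code_cat ent_mmul.
by apply: representableD;
  apply: (representableM (representable_code_pow_h _ _) (representable_code_pow_g _ _)).
Qed.

Lemma representable_first_bot i j :
  representable pi_rates true (fun m => ent (code (rcons (nseq m h) g)) i j).
Proof.
apply: (eq_representable (f := fun m =>
  ent (code (nseq m h)) i false * ent (mcode g%:Z) false j +
  ent (code (nseq m h)) i true * ent (mcode g%:Z) true j)).
  by move=> m; rewrite code_rcons ent_mmul.
by apply: representableD;
  apply: (representableM (representable_code_pow_h _ _) (representable_const _ _)).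
Qed.

Definition pi : mat R := eseq_mat representable_pi.

Lemma mat_at_pi m : mat_at m pi = code (pi_seq m).
Proof. exact: mat_at_eseq_mat. Qed.

Lemma pi_sl2p : sl2p pi.
Proof. by apply/sl2p_eventually/eventuallyT => m; rewrite mat_at_pi; apply: code_sl2p. Qed.

Lemma pi_ur : ur pi.
Proof. by apply/ur_eventually/eventuallyT => m; rewrite mat_at_pi; apply: ur_code. Qed.

Lemma pi_ends_with_bot : prec_e (mcode g%:R) pi.
Proof.
apply/nonneg_eventually; exists 1%N => -[//|m] _.
rewrite !mat_atE mat_at_pi eseq_natr /pi_seq.
have -> : (m.+1 * m.+1 = m * m.+1 + m + 1)%N by lia.
rewrite nseqD catA cats1 code_rcons mmulrK ?mcode_det //.
by case: (code_sl2p (nseq m.+1 h ++ nseq (m * m.+1 + m) g)).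
Qed.

Lemma pi_occ_labels a (n : R) : sl2p a -> 0 <= n -> occ a n pi -> n = h%:R \/ n = g%:R.
Proof.
move=> /sl2p_eventually a_sl2 /eseq_le_eventually n_ge0 /occ_eventually occ_a.
apply: eseq_eventually_in2.
apply: eventually_mono (eventually_and a_sl2 (eventually_and n_ge0 occ_a)) => m [a_m [n_m]].
rewrite mat_at_pi => /(occ_code a_m n_m)[s [k [t [pi_m _ ->]]]].
have : k \in pi_seq m by rewrite pi_m mem_cat mem_rcons mem_head.
by rewrite mem_cat => /orP[] /nseqP[-> _]; [left | right].
Qed.

Lemma eventually_neq_first_bot a :
  eventually (fun m => mat_at m a <> code (rcons (nseq m h) g)).
Proof.
have first_bot0 : ent (code (rcons (nseq 0 h) g)) false false != 0 by rewrite code1.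
have := eseq_eventually_neq_odd (m00 a) (representable_first_bot false false) first_bot0.
by apply: eventually_mono => m /eqP a_m /(congr1 (@m00 _)).
Qed.

Lemma occ_bot_pi_shape a : sl2p a -> occ a g%:R pi ->
  eventually (fun m => exists s, mat_at m a = code (h :: s ++ [:: g; g])).
Proof.
move=> /sl2p_eventually a_sl2 /occ_eventually occ_a.
have [M ev] := eventually_and (eventually_and a_sl2 occ_a) (eventually_neq_first_bot a).
exists M.+1 => -[//|m] /ltnW/ev[[a_m]]; rewrite mat_at_pi eseq_natr.
move=> /(occ_code a_m (le0z_nat g)).
case=> s [k [t [pi_m -> /eqP]]]; rewrite eqz_nat => /eqP k_g; subst k.
have [[|i] s_eq] := rcons_prefix_nseq (introN eqP h_neq_g) (esym pi_m).
  by rewrite s_eq cats1.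
by exists (nseq m h ++ nseq i g); rewrite s_eq -catA -[i.+2]addn2 nseqD.
Qed.

Lemma pi_bot_has_premises a : sl2p a -> occ a g%:R pi ->
  exists b c, [/\ sl2p b, sl2p c, mlt b a, mlt c a & occ b g%:R a /\ occ c h%:R a].
Proof.
move=> a_sl2 /(occ_bot_pi_shape a_sl2) a_shape.
set b := mmul a (minv (mcode g%:R)); set c := mcode h%:R : mat R.
have c_at m : mat_at m c = code [:: h] by rewrite code1 mat_atE eseq_natr.
have b_at : eventually (fun m => exists s,
    mat_at m a = code (rcons (h :: s) g ++ [:: g]) /\ mat_at m b = code (rcons (h :: s) g)).
  apply: eventually_mono a_shape => m [s a_m]; exists s.
  have a_m' : mat_at m a = code (rcons (h :: s) g ++ [:: g]) by rewrite a_m cat_rcons.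
  by rewrite !mat_atE eseq_natr a_m' -cats1 code_cat code1 mmulrK ?mcode_det.
have [m0 [s0 [a_m0 b_m0]]] := eventually_ex b_at.
exists b, c; split.
- by apply/sl2p_eventually; apply: eventually_mono b_at => m [s [_ ->]]; apply: code_sl2p.
- by apply/sl2p_eventually/eventuallyT => m; rewrite c_at; apply: code_sl2p.
- split.
    by apply/mle_eventually; apply: eventually_mono b_at => m [s [-> ->]]; apply: code_le_cat.
  by move=> ba; apply: (@code_neq_cat (rcons (h :: s0) g) [:: g]); rewrite // -a_m0 -b_m0 ba.
- split; first by apply/mle_eventually; apply: eventually_mono a_shape => m [s ->];
    rewrite c_at -cat1s; apply: code_le_cat.
  move=> ca; apply: (@code_neq_cat [:: h] (s0 ++ [:: g; g])); first by case: (s0).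
  by rewrite -(c_at m0) ca a_m0 cat_rcons.
split; apply/occ_eventually.
  by apply: eventually_mono b_at => m [s [-> ->]]; rewrite eseq_natr; apply: occ_code_prefix.
apply: eventually_mono a_shape => m [s ->]; rewrite c_at eseq_natr.
exact: (occ_code_prefix [::] h (s ++ [:: g; g])).
Qed.

End NonstandardProof.

Theorem mainTheorem1 (gb gbb : nat) :
  (0 < gb)%N -> (0 < gbb)%N -> gb <> gbb ->
  exists R : realDomainType, models_T R /\ ~ con_BeSh R gb gbb.
Proof.
move=> gb_gt0 gbb_gt0 gb_neq_gbb; have gbb_neq_gb : gbb <> gb by move=> /esym.
exists (eseq (pi_rates gbb_gt0 gb_gt0)); split; first exact: eseq_models_T.
move=> /(_ (pi gbb_gt0 gb_gt0) (pi_sl2p _ _)); apply; split; last exact: pi_ends_with_bot.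
split=> [|a a_sl2 _ n n_ge0 _|a a_sl2 _]; first exact: pi_ur.
  exact: pi_occ_labels.
exact: pi_bot_has_premises gbb_neq_gb a a_sl2.
Qed.
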